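(* Let $\mathcal{V}$ be a non-trivial quantale. A functor $\mathsf{F}\colon\mathbf{Cat}(\mathcal{V})\to\mathbf{Cat}(\mathcal{V})$ is Kantorovich if and only if it preserves initial morphisms.
   Context: A quantale $(\mathcal{V},\otimes,k)$ is a complete lattice with commutative monoid structure, each $u\otimes-$ preserving joins, $\hom(u,-)$ its right adjoint; non-trivial: $\bot\ne\top$. $\mathcal{V}$-categories $(X,a)$: $k\le a(x,x)$, $a(x,y)\otimes a(y,z)\le a(x,z)$; $\mathcal{V}$-functors $f\colon(X,a)\to(Y,b)$: $a(x,y)\le b(f x,f y)$; initial if equality holds. A cone of $\mathcal{V}$-functors $(f_i\colon(X,a)\to(X_i,a_i))_i$ is initial if $a(x,y)=\bigwedge_i a_i(f_i(x),f_i(y))$. $\mathcal{V}$ is the $\mathcal{V}$-category $(\mathcal{V},\hom)$, and $\mathcal{V}^\kappa$ ($\kappa$ a cardinal) has structure $[f,g]=\bigwedge_{i\in\kappa}\hom(f(i),g(i))$. A $\kappa$-ary predicate lifting for $\mathsf{F}$ is a natural transformation $\lambda\colon\mathbf{Cat}(\mathcal{V})(-,\mathcal{V}^\kappa)\to\mathbf{Cat}(\mathcal{V})(\mathsf{F}-,\mathcal{V})$. For a class $\Lambda$ of predicate liftings, $\mathsf{F}$ is $\Lambda$-Kantorovich if for every $\mathcal{V}$-category $X$ the cone of all $\lambda_X(f)\colon\mathsf{F}X\to\mathcal{V}$, with $\lambda\in\Lambda$ $\kappa$-ary and $f\in\mathbf{Cat}(\mathcal{V})(X,\mathcal{V}^\kappa)$,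 is initial; $\mathsf{F}$ is Kantorovich if it is $\Lambda$-Kantorovich for some class $\Lambda$. *)

Record quantale := Quantale {
  qV :> Type;
  qle : qV -> qV -> Prop;
  qle_refl : forall u, qle u u;
  qle_trans : forall u v w, qle u v -> qle v w -> qle u w;
  qle_antisym : forall u v, qle u v -> qle v u -> u = v;
  qsup : (qV -> Prop) -> qV;
  qsup_ub : forall (S : qV -> Prop) s, S s -> qle s (qsup S);
  qsup_least : forall (S : qV -> Prop) u, (forall s, S s -> qle s u) -> qle (qsup S) u;
  qtensor : qV -> qV -> qV;
  qk : qV;
  qtensor_assoc : forall u v w, qtensor u (qtensor v w) = qtensor (qtensor u v) w;
  qtensor_comm : forall u v, qtensor u v = qtensor v u;
  qtensor_unit : forall u, qtensor qk u = u;
  qtensor_sup : forall u (S : qV -> Prop),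
      qtensor u (qsup S) = qsup (fun w => exists s, S s /\ w = qtensor u s);
  qhom : qV -> qV -> qV;
  qhom_adj : forall u v w, qle (qtensor u w) v <-> qle w (qhom u v)
}.

Arguments qle {q}. Arguments qsup {q}. Arguments qtensor {q}.
Arguments qk {q}. Arguments qhom {q}.

Definition qinf {Q : quantale} (S : Q -> Prop) : Q :=
  qsup (fun w => forall s, S s -> qle w s).
Definition qtop (Q : quantale) : Q := qsup (fun _ => True).
Definition qbot (Q : quantale) : Q := qsup (fun _ => False).
Definition nontrivial (Q : quantale) : Prop := qbot Q <> qtop Q.

Section Basics.
Variable Q : quantale.

Lemma qinf_lb (S : Q -> Prop) s : S s -> qle (qinf S) s.
Proof. intros Hs; apply qsup_least; intros w Hw; apply Hw, Hs. Qed.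

Lemma qinf_glb (S : Q -> Prop) u : (forall s, S s -> qle u s) -> qle u (qinf S).
Proof. intros H; apply qsup_ub; exact H. Qed.

Lemma qtensor_mono_r (a b c : Q) : qle b c -> qle (qtensor a b) (qtensor a c).
Proof.
  intros H; apply (proj2 (qhom_adj Q a (qtensor a c) b)).
  apply qle_trans with c; [exact H|].
  apply (proj1 (qhom_adj Q a (qtensor a c) c)), qle_refl.
Qed.

Lemma qtensor_mono (a a' b b' : Q) :
  qle a a' -> qle b b' -> qle (qtensor a b) (qtensor a' b').
Proof.
  intros H1 H2; apply qle_trans with (qtensor a b').
  - apply qtensor_mono_r, H2.
  - rewrite (qtensor_comm Q a b'), (qtensor_comm Q a' b').
    apply qtensor_mono_r, H1.
Qed.

Lemma qcounit (u v : Q) : qle (qtensor u (qhom u v)) v.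
Proof. apply (proj2 (qhom_adj Q u v (qhom u v))), qle_refl. Qed.

Lemma qhom_refl (u : Q) : qle qk (qhom u u).
Proof.
  apply (proj1 (qhom_adj Q u u qk)).
  rewrite qtensor_comm, qtensor_unit; apply qle_refl.
Qed.

Lemma qhom_trans (u v w : Q) : qle (qtensor (qhom u v) (qhom v w)) (qhom u w).
Proof.
  apply (proj1 (qhom_adj Q u w _)).
  rewrite qtensor_assoc.
  apply qle_trans with (qtensor v (qhom v w)); [|apply qcounit].
  apply qtensor_mono; [apply qcounit|apply qle_refl].
Qed.
End Basics.

Record VCat (Q : quantale) := {
  vob :> Type;
  vhom : vob -> vob -> Q;
  vrefl : forall x, qle qk (vhom x x);
  vtrans : forall x y z, qle (qtensor (vhom x y) (vhom y z)) (vhom x z)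
}.
Arguments vhom {Q} v _ _.

Record VFun {Q : quantale} (X Y : VCat Q) := {
  vfn :> X -> Y;
  vfn_mono : forall x y, qle (vhom X x y) (vhom Y (vfn x) (vfn y))
}.
Arguments vfn {Q X Y} _ _.

Definition vid {Q : quantale} (X : VCat Q) : VFun X X :=
  {| vfn := fun x => x; vfn_mono := fun x y => qle_refl Q _ |}.

Definition vcomp {Q : quantale} {X Y Z : VCat Q} (g : VFun Y Z) (f : VFun X Y)
  : VFun X Z.
Proof.
  refine {| vfn := fun x => g (f x) |}.
  intros x y; eapply qle_trans; [apply (vfn_mono _ _ f)|apply (vfn_mono _ _ g)].
Defined.

Definition initial {Q : quantale} {X Y : VCat Q} (f : VFun X Y) : Prop :=
  forall x y : X, vhom X x y = vhom Y (f x) (f y).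

Definition Vself (Q : quantale) : VCat Q :=
  {| vob := qV Q; vhom := @qhom Q; vrefl := qhom_refl Q; vtrans := qhom_trans Q |}.

Definition Vpow_hom (Q : quantale) (kappa : Type) (f g : kappa -> Q) : Q :=
  qinf (fun v => exists i, v = qhom (f i) (g i)).

Lemma Vpow_refl (Q : quantale) (kappa : Type) (f : kappa -> Q) :
  qle qk (Vpow_hom Q kappa f f).
Proof.
  apply qinf_glb; intros s [i ->]; apply qhom_refl.
Qed.

Lemma Vpow_trans (Q : quantale) (kappa : Type) (f g h : kappa -> Q) :
  qle (qtensor (Vpow_hom Q kappa f g) (Vpow_hom Q kappa g h)) (Vpow_hom Q kappa f h).
Proof.
  apply qinf_glb; intros s [i ->].
  eapply qle_trans; [|apply (qhom_trans Q (f i) (g i) (h i))].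
  apply qtensor_mono; apply qinf_lb; exists i; reflexivity.
Qed.

Definition Vpow (Q : quantale) (kappa : Type) : VCat Q :=
  {| vob := kappa -> Q; vhom := Vpow_hom Q kappa;
     vrefl := Vpow_refl Q kappa; vtrans := Vpow_trans Q kappa |}.

Record Endofunctor (Q : quantale) := {
  Fob : VCat Q -> VCat Q;
  Fmap : forall X Y : VCat Q, VFun X Y -> VFun (Fob X) (Fob Y);
  Fmap_id : forall (X : VCat Q) (x : Fob X), Fmap X X (vid X) x = x;
  Fmap_comp : forall (X Y Z : VCat Q) (f : VFun X Y) (g : VFun Y Z) (x : Fob X),
      Fmap X Z (vcomp g f) x = Fmap Y Z g (Fmap X Y f x)
}.
Arguments Fob {Q} e X.
Arguments Fmap {Q} e {X Y} _.

(* kappa-ary predicate liftings: natural transformations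
   Cat(V)(-, V^kappa) -> Cat(V)(F -, V) *)
Record PredLifting {Q : quantale} (F : Endofunctor Q) (kappa : Type) := {
  plift : forall X : VCat Q, VFun X (Vpow Q kappa) -> VFun (Fob F X) (Vself Q);
  plift_nat : forall (X Y : VCat Q) (h : VFun Y X) (g : VFun X (Vpow Q kappa))
      (x : Fob F Y),
      plift Y (vcomp g h) x = plift X g (Fmap F h x)
}.
Arguments plift {Q F kappa} p X _.

Definition LiftingClass {Q : quantale} (F : Endofunctor Q) :=
  forall kappa : Type, PredLifting F kappa -> Prop.

Definition Lambda_Kantorovich {Q : quantale} (F : Endofunctor Q)
  (Lam : LiftingClass F) : Prop :=
  forall (X : VCat Q) (x y : Fob F X),
    vhom (Fob F X) x y =
    qinf (fun v => exists (kappa : Type) (l : PredLifting F kappa), Lam kappa l /\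
            exists f : VFun X (Vpow Q kappa),
              v = qhom (plift l X f x) (plift l X f y)).

Definition Kantorovich {Q : quantale} (F : Endofunctor Q) : Prop :=
  exists Lam : LiftingClass F, Lambda_Kantorovich F Lam.

Definition preserves_initial {Q : quantale} (F : Endofunctor Q) : Prop :=
  forall (X Y : VCat Q) (f : VFun X Y), initial f -> initial (Fmap F f).

(* If F is Λ-Kantorovich and m : X -> Y is initial, every
   f : X -> V^κ extends along m to a V-functor g : Y -> V^κ with g ∘ m = f
   (a left Kan extension), so by naturality the cone of liftings at X is the
   cone at Y precomposed with F m; initiality of both cones makes F m initial.
   Conversely, if F preserves initial maps, take all predicate liftings.  The
   Yoneda embedding y : X -> V^X is initial, hence so is F y, and the lifting
   represented by t = F y (a) maps y to [F y a, F y -], which at b is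
   FX(a, b) and at a is above k; this one member of the cone already bounds
   FX(a, b) from above. *)

From Stdlib Require Import FunctionalExtensionality ProofIrrelevance PropExtensionality.

Section QuantaleFacts.
Variable Q : quantale.

Lemma qhom_unit (u : Q) : qhom qk u = u.
Proof.
  apply qle_antisym.
  - rewrite <- (qtensor_unit Q (qhom qk u)) at 1; apply qcounit.
  - apply (proj1 (qhom_adj Q qk u u)); rewrite qtensor_unit; apply qle_refl.
Qed.

Lemma qhom_antitone_l (u u' v : Q) : qle u u' -> qle (qhom u' v) (qhom u v).
Proof.
  intros Huu'; apply (proj1 (qhom_adj Q u v _)).
  apply qle_trans with (qtensor u' (qhom u' v)); [|apply qcounit].
  apply qtensor_mono; [exact Huu'|apply qle_refl].
Qed.

Lemma qinf_ext (S S' : Q -> Prop) : (forall v, S v <-> S' v) -> qinf S = qinf S'.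
Proof.
  intros HS; f_equal; apply functional_extensionality; intros v.
  apply propositional_extensionality, HS.
Qed.

End QuantaleFacts.

Lemma VFun_ext {Q : quantale} {X Y : VCat Q} (h1 h2 : VFun X Y) :
  (forall x, h1 x = h2 x) -> h1 = h2.
Proof.
  destruct h1 as [f1 m1], h2 as [f2 m2]; simpl; intros H.
  assert (f1 = f2) as <- by (apply functional_extensionality; exact H).
  f_equal; apply proof_irrelevance.
Qed.

Section KanExtension.
Variables (Q : quantale) (X Y : VCat Q) (m : VFun X Y) (kappa : Type)
  (f : VFun X (Vpow Q kappa)).

Definition lan_fn (y : Y) : kappa -> Q :=
  fun i => qsup (fun w => exists x, w = qtensor (vhom Y (m x) y) (f x i)).

Lemma lan_fn_mono (y y' : Y) :
  qle (vhom Y y y') (vhom (Vpow Q kappa) (lan_fn y) (lan_fn y')).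
Proof.
  apply qinf_glb; intros s [i ->].
  apply (proj1 (qhom_adj Q _ _ _)).
  rewrite qtensor_comm; unfold lan_fn at 1; rewrite qtensor_sup.
  apply qsup_least; intros w [s [[x ->] ->]].
  eapply qle_trans; [|apply qsup_ub; exists x; reflexivity].
  rewrite qtensor_assoc; apply qtensor_mono; [|apply qle_refl].
  rewrite qtensor_comm; apply vtrans.
Qed.

Definition lan : VFun Y (Vpow Q kappa) := Build_VFun Q Y (Vpow Q kappa) lan_fn lan_fn_mono.

Lemma lan_comp_initial : initial m -> vcomp lan m = f.
Proof.
  intros Hm; apply VFun_ext; intros x0; simpl.
  apply functional_extensionality; intros i; apply qle_antisym.
  - apply qsup_least; intros w [x ->].
    rewrite <- Hm, qtensor_comm; apply (proj2 (qhom_adj Q _ _ _)).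
    eapply qle_trans; [apply (vfn_mono _ _ f x x0)|].
    apply qinf_lb; exists i; reflexivity.
  - eapply qle_trans; [|apply qsup_ub; exists x0; reflexivity].
    rewrite <- (qtensor_unit Q (f x0 i)) at 1.
    apply qtensor_mono; [apply vrefl|apply qle_refl].
Qed.

End KanExtension.

Section Yoneda.
Variables (Q : quantale) (X : VCat Q).

Definition yoneda_fn (x : X) : X -> Q := fun z => vhom X z x.

Lemma yoneda_fn_mono (x y : X) :
  qle (vhom X x y) (vhom (Vpow Q X) (yoneda_fn x) (yoneda_fn y)).
Proof.
  apply qinf_glb; intros s [z ->].
  apply (proj1 (qhom_adj Q _ _ _)), vtrans.
Qed.

Definition yoneda : VFun X (Vpow Q X) := Build_VFun Q X (Vpow Q X) yoneda_fn yoneda_fn_mono.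

Lemma yoneda_initial : initial yoneda.
Proof.
  intros x y; apply qle_antisym; [apply yoneda_fn_mono|].
  eapply qle_trans; [apply qinf_lb; exists x; reflexivity|].
  simpl; unfold yoneda_fn; rewrite <- (qhom_unit Q (vhom X x y)) at 2.
  apply qhom_antitone_l, vrefl.
Qed.

End Yoneda.

Section RepresentedLifting.
Variables (Q : quantale) (F : Endofunctor Q) (kappa : Type) (t : Fob F (Vpow Q kappa)).

Definition represented_fn (Z : VCat Q) (g : VFun Z (Vpow Q kappa)) (z : Fob F Z) : Q :=
  vhom (Fob F (Vpow Q kappa)) t (Fmap F g z).

Lemma represented_fn_mono (Z : VCat Q) (g : VFun Z (Vpow Q kappa)) (z z' : Fob F Z) :
  qle (vhom (Fob F Z) z z') (qhom (represented_fn Z g z) (represented_fn Z g z')).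
Proof.
  apply (proj1 (qhom_adj Q _ _ _)).
  eapply qle_trans; [|apply vtrans].
  apply qtensor_mono; [apply qle_refl|apply vfn_mono].
Qed.

Definition represented_plift (Z : VCat Q) (g : VFun Z (Vpow Q kappa)) :
  VFun (Fob F Z) (Vself Q) :=
  Build_VFun Q (Fob F Z) (Vself Q) (represented_fn Z g) (represented_fn_mono Z g).

Definition represented_lifting : PredLifting F kappa.
Proof.
  refine {| plift := represented_plift |}.
  intros X Y h g x; simpl; unfold represented_fn; rewrite Fmap_comp; reflexivity.
Defined.

End RepresentedLifting.

Section Characterisation.
Variables (Q : quantale) (F : Endofunctor Q).

Definition lifted_cone (Lam : LiftingClass F) (X : VCat Q) (x y : Fob F X) (v : Q) : Prop :=
  exists (kappa : Type) (l : PredLifting F kappa), Lam kappa l /\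
    exists f : VFun X (Vpow Q kappa), v = qhom (plift l X f x) (plift l X f y).

Lemma lifted_cone_initial (Lam : LiftingClass F) (X Y : VCat Q) (m : VFun X Y)
  (x y : Fob F X) :
  initial m ->
  forall v, lifted_cone Lam X x y v <-> lifted_cone Lam Y (Fmap F m x) (Fmap F m y) v.
Proof.
  intros Hm v; split; intros [kappa [l [Hl [g ->]]]]; exists kappa, l; split; auto.
  - exists (lan Q X Y m kappa g).
    rewrite <- !(plift_nat F kappa l), (lan_comp_initial Q X Y m kappa g Hm).
    reflexivity.
  - exists (vcomp g m); rewrite !(plift_nat F kappa l); reflexivity.
Qed.

Lemma Kantorovich_preserves_initial : Kantorovich F -> preserves_initial F.
Proof.
  intros [Lam HK] X Y m Hm x y.
  rewrite (HK X x y), (HK Y (Fmap F m x) (Fmap F m y)).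
  apply qinf_ext, (lifted_cone_initial Lam X Y m x y Hm).
Qed.

Lemma preserves_initial_Kantorovich_all :
  preserves_initial F -> Lambda_Kantorovich F (fun _ _ => True).
Proof.
  intros HF X x y; apply qle_antisym.
  - apply qinf_glb; intros s [kappa [l [_ [g ->]]]].
    apply (vfn_mono _ _ (plift l X g)).
  - set (t := Fmap F (yoneda Q X) x).
    eapply qle_trans.
    { apply qinf_lb; exists (vob Q X), (represented_lifting Q F X t).
      split; [exact I|]; exists (yoneda Q X); reflexivity. }
    simpl; unfold represented_fn, t.
    rewrite <- !(HF _ _ _ (yoneda_initial Q X)).
    rewrite <- (qhom_unit Q (vhom (Fob F X) x y)) at 2.
    apply qhom_antitone_l, vrefl.
Qed.

End Characterisation.

Theorem theorem9 (Q : quantale) (HQ : nontrivial Q) (F : Endofunctor Q) :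
  Kantorovich F <-> preserves_initial F.
Proof.
  split.
  - apply Kantorovich_preserves_initial.
  - intros HF; exists (fun _ _ => True); apply preserves_initial_Kantorovich_all, HF.
Qed.
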